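(* Let $M\ge2$ and $\mathfrak{F}_M=\{\pi/M,2\pi/M,\dots,(M-1)\pi/M\}$. Let $K=\kappa^N$ be a complex parameter and, for $\phi\in\mathfrak{F}_M$, set (with a fixed choice of square root) $$\Delta_\phi=e^{i\phi}\big(\sqrt{\cos^2\phi+K}+\cos\phi\big),\quad \Delta^*_\phi=e^{-i\phi}\big(\sqrt{\cos^2\phi+K}+\cos\phi\big),\quad \Lambda_\phi=\Delta_\phi\Delta^*_\phi .$$ Let $1\le n\le M-1$ and let $\phi_1,\dots,\phi_n$ be distinct elements of $\mathfrak{F}_M$; write $\Delta_k=\Delta_{\phi_k}$, $\Delta_k^*=\Delta^*_{\phi_k}$, $\Lambda_k=\Lambda_{\phi_k}$, and assume $K$ and $\xi\in\mathbb{C}$ are generic so that all denominators below are nonzero. Define the phase shifts $d_{j,k}=\frac{(\Delta_j-\Delta_k)(\Delta_j^*-\Delta_k^* )}{(\Delta_j-\Delta_k^* )(\Delta_j^*-\Delta_k)}$, and for amplitudes $f_1,\dots,f_n$ and integer $m$ define recursively $\Theta^{(0)}_m=1$ and $$\Theta^{(n)}_m(\{f_k,\phi_k\}_{k=1}^n)=\Theta^{(n-1)}_m(\{f_k,\phi_k\}_{k=1}^{n-1})-f_n e^{2im\phi_n}\,\Theta^{(n-1)}_m(\{d_{k,n}f_k,\phi_k\}_{k=1}^{n-1}).$$ Let $s_k(\xi)=\frac{\Delta_k^*}{\Delta_k}\frac{\Delta_k-\xi}{\Delta_k^*-\xi}$, $s_{k,j}=s_k(\Delta_j^* )$, and define $\Theta^{(n)}_m(\xi)=\Theta^{(n)}_m(\{f_k,\phi_k\}_{k=1}^n)$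 with $f_k=s_k(\xi)\prod_{j=1,\,j\ne k}^n s_{k,j}$. Then $$\Theta^{(n)}_n(\xi)=\prod_{k=1}^n\frac{\Delta_k^*-\Delta_k}{\Delta_k^*-\xi}\prod_{1\le j<k\le n}\frac{\Lambda_j-\Lambda_k}{\Delta_j^*-\Delta_k^*},$$ and for $m=0,1,\dots,n$ $$\Theta^{(n)}_m(\xi)=(-K)^{(n-m)(n-m-1)/2}\left(\frac{\xi}{\Delta_1\cdots\Delta_n}\right)^{n-m}\Theta^{(n)}_n(\xi).$$ Moreover, if $\xi=1$, the last formula also holds for $m=-1$.
   Context: Here $\Delta_\phi,\Delta^*_\phi$ parametrize the curve $\Delta\Delta^*=\Delta+\Delta^*+\kappa^N$ with $e^{2i\phi}=\Delta/\Delta^*$ (this holds for either choice of the square root). In the recursion, the functions $\Theta^{(n-1)}_m$ are evaluated at the modified amplitude lists indicated (the amplitudes are treated as formal arguments). *)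

From HB Require Import structures.
From mathcomp Require Import all_boot all_order all_algebra.
From mathcomp Require Import reals trigo.
From mathcomp Require Import complex.
Set Implicit Arguments. Unset Strict Implicit. Unset Printing Implicit Defensive.
Import Order.TTheory GRing.Theory Num.Theory.
Local Open Scope ring_scope.
Local Open Scope complex_scope.

Section Defs.
Variable R : realType.
Local Notation C := R[i].

(* phi_j = j * pi / M  (elements of F_M are j*pi/M with 0 < j < M) *)
Definition phiM (M j : nat) : R := j%:R * pi / M%:R.

Definition expi (x : R) : C := Complex (cos x) (sin x).

(* Delta_phi and Delta^*_phi, with rt a chosen square root of cos^2 phi + K *)
Definition DeltaF (phi : R) (rt : C) : C := expi phi * (rt + (cos phi)%:C).
Definition DeltaSF (phi : R) (rt : C) : C := expi (- phi) * (rt + (cos phi)%:C).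

Definition dshift (D Ds : nat -> C) (j k : nat) : C :=
  ((D j - D k) * (Ds j - Ds k)) / ((D j - Ds k) * (Ds j - D k)).

(* Theta^{(n)}_m({f_k, phi_k}_{k<n}) (0-based indices); E k = e^{i phi_k},
   so that e^{2 i m phi_k} = (E k) ^ (2 m) with an integer exponent. *)
Fixpoint Theta (D Ds E : nat -> C) (m : int) (n : nat) (f : nat -> C) : C :=
  match n with
  | 0 => 1
  | n'.+1 => Theta D Ds E m n' f
             - f n' * (E n') ^ (2 * m) * Theta D Ds E m n' (fun k => dshift D Ds k n' * f k)
  end.

Definition sfun (D Ds : nat -> C) (k : nat) (xi : C) : C :=
  (Ds k / D k) * ((D k - xi) / (Ds k - xi)).

Definition ampl (D Ds : nat -> C) (n : nat) (xi : C) (k : nat) : C :=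
  sfun D Ds k xi * \prod_(l < n | (l : nat) != k) sfun D Ds k (Ds l).

End Defs.

(* Write x_k = Delta_k and y_k = Delta*_k.  Multiplying Theta by the
   Vandermonde product V(y) of the y_k unfolds the recursion into a sum, over
   the subsets S of the indices, of weighted Vandermonde products of the points
   obtained from y by replacing y_l with x_l for l in S; by multilinearity of
   the determinant this is the determinant of the matrix with rows
   y_k^i + c_k x_k^i.  For the amplitudes s_k the weights are
   c_k = -(y_k/x_k)^(n-m) (x_k - xi)/(y_k - xi), and on the curve
   x y = x + y + K each rescaled row is (y_k - x_k) times the values at
   Lambda_k = x_k y_k of explicit polynomials of degree < n.  So the
   determinant is V(Lambda) times the determinant of a constant coefficient
   matrix, which is block triangular and equals (-K)^((n-m)(n-m-1)/2) xi^(n-m);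
   for m = -1 and xi = 1 another family of polynomials gives
   (-K)^(n(n+1)/2). *)

From HB Require Import structures.
From mathcomp Require Import all_boot all_order all_algebra.
From mathcomp Require Import reals trigo.
From mathcomp Require Import complex.
From mathcomp Require Import ring zify.
Set Implicit Arguments. Unset Strict Implicit. Unset Printing Implicit Defensive.
Import Order.TTheory GRing.Theory Num.Theory.
Local Open Scope ring_scope.

Section Expansion.
Variable F : fieldType.
Variables x y : nat -> F.

Definition update (z : nat -> F) (k : nat) (v : F) : nat -> F :=
  fun i => if i == k then v else z i.

(* [subst_sum p G c z] is the sum, over the subsets S of [0, p), of
   (\prod_(l in S) c l) * G z_S, where z_S takes the value x l at l in S,
   y l at the other l < p, and agrees with z from p on. *)
Fixpoint subst_sum (p : nat) (G : (nat -> F) -> F) (c z : nat -> F) : F :=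
  if p is p'.+1 then
    subst_sum p' G c (update z p' (y p')) + c p' * subst_sum p' G c (update z p' (x p'))
  else G z.

Lemma eq_subst_sum p G1 G2 c z :
  (forall w, (forall i, (p <= i)%N -> w i = z i) -> G1 w = G2 w) ->
  subst_sum p G1 c z = subst_sum p G2 c z.
Proof.
elim: p z => [|p IH] z eqG /=; first exact: eqG.
by congr (_ + _ * _); apply: IH => w eqw; apply: eqG => i le_pi;
  rewrite eqw ?(ltnW le_pi) // /update gtn_eqF.
Qed.

Lemma eq_subst_sum_weight p G c1 c2 z :
  (forall l, (l < p)%N -> c1 l = c2 l) -> subst_sum p G c1 z = subst_sum p G c2 z.
Proof.
elim: p z => [|p IH] z eqc //=.
by rewrite eqc // !IH // => l lt_lp; apply: eqc; apply: ltnW.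
Qed.

Lemma subst_sum_mulr p G c z a : subst_sum p (fun w => G w * a) c z = subst_sum p G c z * a.
Proof. by elim: p z => [|p IH] z //=; rewrite !IH mulrDl mulrA. Qed.

Lemma subst_sum_mul_prod p G c z (g : nat -> F -> F) :
  (forall l, (l < p)%N -> g l (y l) != 0) ->
  subst_sum p (fun w => G w * \prod_(0 <= l < p) g l (w l)) c z =
  (\prod_(0 <= l < p) g l (y l)) *
    subst_sum p G (fun l => c l * g l (x l) / g l (y l)) z.
Proof.
elim: p G z => [|p IH] G z gy_neq0 /=; first by rewrite !big_geq // mulr1 mul1r.
have split_last v :
    subst_sum p (fun w => G w * \prod_(0 <= l < p.+1) g l (w l)) c (update z p v) =
    (\prod_(0 <= l < p) g l (y l)) *
      (subst_sum p G (fun l => c l * g l (x l) / g l (y l)) (update z p v) * g p v).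
  rewrite (@eq_subst_sum _ _ (fun w => (G w * g p v) * \prod_(0 <= l < p) g l (w l))).
    by rewrite IH ?subst_sum_mulr // => l lt_lp; apply: gy_neq0; apply: ltnW.
  by move=> w eqw; rewrite big_nat_recr //= eqw // /update eqxx mulrAC mulrA.
rewrite !split_last big_nat_recr //=.
by field; apply: gy_neq0.
Qed.

Definition vdm (p : nat) (z : nat -> F) : F :=
  \prod_(0 <= k < p) \prod_(0 <= l < k) (z k - z l).

Lemma vdmS p z : vdm p.+1 z = vdm p z * \prod_(0 <= l < p) (z p - z l).
Proof. exact: big_nat_recr. Qed.

Lemma vdm_ord p z : vdm p z = \prod_(k < p) \prod_(l < p | (l < k)%N) (z k - z l).
Proof.
rewrite /vdm big_mkord; apply: eq_bigr => k _.
by rewrite (big_ord_narrow (ltnW (ltn_ord k))) big_mkord.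
Qed.

Lemma prod_ratio_vdm n (a b : nat -> F) :
  \prod_(k < n) \prod_(l < n | (l < k)%N) ((a l - a k) / (b l - b k)) = vdm n a / vdm n b.
Proof.
rewrite !vdm_ord -prodf_div; apply: eq_bigr => k _; rewrite -prodf_div.
by apply: eq_bigr => l _; rewrite -opprB -[b l - _]opprB invrN mulrNN.
Qed.

Definition sratio (k : nat) (t : F) : F := (x k - t) / (y k - t).

Lemma subst_sum_vdmS_update p c z v :
  (forall l, (l < p)%N -> y l - v != 0) ->
  subst_sum p (vdm p.+1) c (update z p v) =
  (\prod_(0 <= l < p) (v - y l)) *
    subst_sum p (vdm p) (fun l => c l * sratio l v) (update z p v).
Proof.
move=> yv_neq0.
rewrite (@eq_subst_sum _ _ (fun w => vdm p w * \prod_(0 <= l < p) (v - w l))); last first.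
  by move=> w eqw; rewrite vdmS eqw // /update eqxx.
rewrite (@subst_sum_mul_prod _ _ _ _ (fun _ t => v - t)) => [|l lt_lp]; last first.
  by rewrite -opprB oppr_eq0 yv_neq0.
congr (_ * _); apply: eq_subst_sum_weight => l lt_lp.
have yv := yv_neq0 l lt_lp.
by rewrite /sratio; field; rewrite yv -opprB oppr_eq0.
Qed.

Definition phase_shift (j k : nat) : F :=
  ((x j - x k) * (y j - y k)) / ((x j - y k) * (y j - x k)).

Fixpoint theta (e : nat -> F) (n : nat) (f : nat -> F) : F :=
  if n is n'.+1 then
    theta e n' f - f n' * e n' * theta e n' (fun k => phase_shift k n' * f k)
  else 1.

Lemma eq_theta e1 e2 n f :
  (forall k, (k < n)%N -> e1 k = e2 k) -> theta e1 n f = theta e2 n f.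
Proof.
elim: n f => [|n IH] f eqe //=.
by rewrite eqe // !IH // => k lt_kn; apply: eqe; apply: ltnW.
Qed.

Definition theta_weight (e : nat -> F) (p : nat) (f : nat -> F) (k : nat) : F :=
  - (f k * e k) / \prod_(0 <= j < p | j != k) sratio k (y j).

Lemma prod_nat_recr_neq p l (G : nat -> F) : (l < p)%N ->
  \prod_(0 <= j < p.+1 | j != l) G j = (\prod_(0 <= j < p | j != l) G j) * G p.
Proof. by move=> lt_lp; rewrite big_mkcond big_nat_recr //= -big_mkcond /= gtn_eqF. Qed.

Section WeightRecursion.
Variables (e f : nat -> F) (p l : nat).
Hypothesis lt_lp : (l < p)%N.
Hypotheses (xlyp : x l - y p != 0) (ylyp : y l - y p != 0).

Lemma theta_weightS_y : theta_weight e p.+1 f l * sratio l (y p) = theta_weight e p f l.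
Proof.
rewrite /theta_weight prod_nat_recr_neq // /sratio.
set P := \prod_(_ <= _ < _ | _) _; have [->|P_neq0] := eqVneq P 0.
  by rewrite !(mul0r, invr0, mulr0).
by field; rewrite P_neq0 xlyp ylyp.
Qed.

Lemma theta_weightS_x : y l - x p != 0 ->
  theta_weight e p.+1 f l * sratio l (x p) =
  theta_weight e p (fun k => phase_shift k p * f k) l.
Proof.
move=> ylxp; rewrite /theta_weight prod_nat_recr_neq // /sratio /phase_shift.
set P := \prod_(_ <= _ < _ | _) _; have [->|P_neq0] := eqVneq P 0.
  by rewrite !(mul0r, invr0, mulr0).
by field; rewrite P_neq0 xlyp ylyp ylxp.
Qed.

End WeightRecursion.

Lemma theta_weight_last e f p :
  (forall l, (l < p)%N -> x p - y l != 0) -> (forall l, (l < p)%N -> y p - y l != 0) ->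
  theta_weight e p.+1 f p * \prod_(0 <= l < p) (x p - y l) =
  - (f p * e p) * \prod_(0 <= l < p) (y p - y l).
Proof.
move=> xpyl ypyl; rewrite /theta_weight.
have -> : \prod_(0 <= j < p.+1 | j != p) sratio p (y j) = \prod_(0 <= j < p) sratio p (y j).
  rewrite big_mkcond big_nat_recr //= eqxx mulr1.
  by apply: eq_big_nat => i /andP[_ lt_ip]; rewrite ltn_eqF.
have -> : \prod_(0 <= l < p) (x p - y l) =
          \prod_(0 <= l < p) sratio p (y l) * \prod_(0 <= l < p) (y p - y l).
  rewrite -big_split; apply: eq_big_nat => l /andP[_ lt_lp] /=.
  by rewrite /sratio divfK ?ypyl.
have : \prod_(0 <= l < p) sratio p (y l) != 0.
  rewrite prodf_seq_neq0; apply/allP => l; rewrite mem_index_iota => /andP[_ lt_lp].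
  by rewrite /sratio mulf_neq0 ?invr_eq0 ?xpyl ?ypyl.
set S := \prod_(_ <= _ < _) _ => S_neq0.
by field.
Qed.

(* Adding the index p either keeps y p or replaces it by x p; the weights of
   the l < p then change by [sratio l (y p)], resp. [sratio l (x p)], and the
   latter change is exactly the phase shift d_(l,p) of the recursion. *)
Lemma theta_vdm e p f z :
  (forall k l, (k < p)%N -> (l < p)%N -> k != l -> x k - y l != 0) ->
  (forall k l, (k < p)%N -> (l < p)%N -> k != l -> y k - y l != 0) ->
  theta e p f * vdm p y = subst_sum p (vdm p) (theta_weight e p f) z.
Proof.
elim: p f z => [|p IH] f z xy_neq0 yy_neq0; first by rewrite /= /vdm !big_geq ?mulr1.
have [xy yy] : (forall k l, (k < p)%N -> (l < p)%N -> k != l -> x k - y l != 0) /\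
               (forall k l, (k < p)%N -> (l < p)%N -> k != l -> y k - y l != 0).
  by split=> k l lt_kp lt_lp; [apply: xy_neq0 | apply: yy_neq0]; apply: ltnW.
have ne_p l : (l < p)%N -> l != p by move=> lt_lp; rewrite neq_ltn lt_lp.
have lt_lS l : (l < p)%N -> (l < p.+1)%N by move=> lt_lp; rewrite ltnS ltnW.
have xlyp l : (l < p)%N -> x l - y p != 0.
  by move=> lt_lp; apply: xy_neq0; rewrite ?ltnSn ?lt_lS ?ne_p.
have xpyl l : (l < p)%N -> x p - y l != 0.
  by move=> lt_lp; apply: xy_neq0; rewrite ?ltnSn ?lt_lS // eq_sym ne_p.
have ylyp l : (l < p)%N -> y l - y p != 0.
  by move=> lt_lp; apply: yy_neq0; rewrite ?ltnSn ?lt_lS ?ne_p.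
have ypyl l : (l < p)%N -> y p - y l != 0.
  by move=> lt_lp; apply: yy_neq0; rewrite ?ltnSn ?lt_lS // eq_sym ne_p.
have ylxp l : (l < p)%N -> y l - x p != 0 by move/xpyl; rewrite -opprB oppr_eq0.
rewrite /= !subst_sum_vdmS_update //.
rewrite (@eq_subst_sum_weight _ _ _ (theta_weight e p f)); last first.
  by move=> l lt_lp; apply: theta_weightS_y; rewrite ?xlyp ?ylyp.
rewrite [X in _ = _ + _ * (_ * X)](@eq_subst_sum_weight _ _ _
    (theta_weight e p (fun k => phase_shift k p * f k))); last first.
  by move=> l lt_lp; apply: theta_weightS_x; rewrite ?xlyp ?ylyp ?ylxp.
rewrite -!IH // vdmS [X in _ = _ + X]mulrA theta_weight_last //.
ring.
Qed.

End Expansion.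

Section Determinant.
Variable F : fieldType.
Variables x y : nat -> F.

Definition pow_mx N (z : nat -> F) : 'M[F]_N := \matrix_(k < N, i < N) z k ^+ i.

Lemma det_pow_mx N z : \det (pow_mx N z) = vdm N z.
Proof.
have -> : pow_mx N z = (Vandermonde N (\row_(j < N) z j))^T.
  by apply/matrixP => i j; rewrite !mxE.
rewrite det_tr det_Vandermonde vdm_ord.
under eq_bigr do rewrite big_mkcond.
rewrite exchange_big; apply: eq_bigr => k _; rewrite -big_mkcond.
by apply: eq_bigr => l _; rewrite !mxE.
Qed.

Definition mixed_mx N p (c z : nat -> F) : 'M[F]_N :=
  \matrix_(k < N, i < N) if (k < p)%N then y k ^+ i + c k * x k ^+ i else z k ^+ i.

Lemma subst_sum_det N p c z : (p <= N)%N ->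
  subst_sum x y p (fun w => \det (pow_mx N w)) c z = \det (mixed_mx N p c z).
Proof.
elim: p z => [|p IH] z lt_pN /=.
  by congr (\det _); apply/matrixP => k i; rewrite !mxE.
have other_rows v : row' (Ordinal lt_pN) (mixed_mx N p c (update z p v)) =
                    row' (Ordinal lt_pN) (mixed_mx N p.+1 c z).
  apply/matrixP => k i; rewrite !mxE /=.
  have ne_kp : bump p k != p by rewrite eq_sym neq_bump.
  have -> : (bump p k < p.+1)%N = (bump p k < p)%N.
    by rewrite ltnS leq_eqVlt (negbTE ne_kp).
  rewrite /update; case: ifP => // _; case: eqP => // eq_kp.
  by rewrite eq_kp eqxx in ne_kp.
rewrite !IH ?(ltnW lt_pN) // (@determinant_multilinear _ _ (mixed_mx N p.+1 c z)
  (mixed_mx N p c (update z p (y p))) (mixed_mx N p c (update z p (x p)))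
  (Ordinal lt_pN) 1 (c p)) ?mul1r ?other_rows //.
by apply/rowP => i; rewrite !mxE /= ltnSn ltnn /update eqxx mul1r.
Qed.

Lemma theta_det e N f z :
  (forall k l, (k < N)%N -> (l < N)%N -> k != l -> x k - y l != 0) ->
  (forall k l, (k < N)%N -> (l < N)%N -> k != l -> y k - y l != 0) ->
  theta x y e N f * vdm N y = \det (mixed_mx N N (theta_weight x y e N f) z).
Proof.
move=> xy_neq0 yy_neq0; rewrite (theta_vdm _ _ z) // -subst_sum_det //.
by apply: eq_subst_sum => w _; rewrite det_pow_mx.
Qed.

End Determinant.

Section CurvePolynomials.
Variables (F : fieldType) (K : F).

(* On the curve a b = a + b + K we have a + b = a b - K, so the sums
   h_s = (b ^ s.+1 - a ^ s.+1) / (b - a), which satisfy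
   h_(s+2) = (a + b) h_(s+1) - a b h_s, are polynomials in a b. *)
Fixpoint hpoly (s : nat) : {poly F} :=
  if s is s1.+1 then
    if s1 is s'.+1 then ('X - K%:P) * hpoly s1 - 'X * hpoly s' else 'X - K%:P
  else 1.

Lemma hpolySS s : hpoly s.+2 = ('X - K%:P) * hpoly s.+1 - 'X * hpoly s.
Proof. by []. Qed.

Definition gpoly s := hpoly s.+1 - 'X * hpoly s.

Definition apoly (r t : nat) : {poly F} :=
  if (t < r)%N then - ('X^t * hpoly (r - t).-1)
  else if t == r then 0 else 'X^r * hpoly (t - r).-1.

Section OnCurve.
Variables a b : F.
Hypothesis on_curve : a * b = a + b + K.

Lemma horner_hpoly s : (b - a) * (hpoly s).[a * b] = b ^+ s.+1 - a ^+ s.+1.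
Proof.
suff hS : (b - a) * (hpoly s).[a * b] = b ^+ s.+1 - a ^+ s.+1 /\
          (b - a) * (hpoly s.+1).[a * b] = b ^+ s.+2 - a ^+ s.+2 by case: hS.
elim: s => [|s [IH1 IH2]].
  by rewrite !hornerE on_curve; split; ring.
split=> //; rewrite hpolySS !hornerE.
have -> : a * b - K = a + b by rewrite on_curve; ring.
by rewrite mulrBr (mulrCA (b - a)) IH2 (mulrCA (b - a)) IH1 !exprS; ring.
Qed.

Lemma horner_gpoly s :
  (b - a) * (gpoly s).[a * b] = a ^+ s.+2 * (b - 1) - b ^+ s.+2 * (a - 1).
Proof.
by rewrite /gpoly !hornerE mulrBr (mulrCA (b - a)) !horner_hpoly // !exprS; ring.
Qed.

Lemma horner_apoly r t : (b - a) * (apoly r t).[a * b] = a ^+ r * b ^+ t - b ^+ r * a ^+ t.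
Proof.
rewrite /apoly; case: ltnP => [lt_tr|le_rt].
  have [d ->] : exists d, r = (t + d.+1)%N by exists (r - t).-1; lia.
  rewrite (_ : (t + d.+1 - t).-1 = d)%N; last by lia.
  by rewrite hornerN hornerM hornerXn mulrN mulrCA horner_hpoly // !exprD exprMn; ring.
case: eqP => [->|ne_tr]; first by rewrite horner0 mulr0 mulrC subrr.
have [d ->] : exists d, t = (r + d.+1)%N by exists (t - r).-1; lia.
rewrite (_ : (r + d.+1 - r).-1 = d)%N; last by lia.
by rewrite hornerM hornerXn mulrCA horner_hpoly // !exprD exprMn; ring.
Qed.

End OnCurve.

Lemma coef_hpolySS s i : (hpoly s.+2)`_i =
  (if i is i'.+1 then (hpoly s.+1)`_i' else 0) - K * (hpoly s.+1)`_i
  - (if i is i'.+1 then (hpoly s)`_i' else 0).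
Proof. by rewrite hpolySS mulrBl !coefB coefXM coefCM coefXM; case: i. Qed.

Lemma hpoly_coef s :
  [/\ forall i, (s < i)%N -> (hpoly s)`_i = 0, (hpoly s)`_s = 1 & (hpoly s)`_0 = (- K) ^+ s].
Proof.
pose P s := [/\ forall i, (s < i)%N -> (hpoly s)`_i = 0, (hpoly s)`_s = 1
              & (hpoly s)`_0 = (- K) ^+ s].
suff hS : P s /\ P s.+1 by case: hS.
elim: s => [|s [[A1 A2 A3] [B1 B2 B3]]].
  split; split.
  - by move=> [|i] //= _; rewrite coefC.
  - by rewrite /= coefC.
  - by rewrite /= coefC.
  - by move=> [|[|i]] //= _; rewrite coefB coefX coefC subr0.
  - by rewrite /= coefB coefX coefC subr0.
  - by rewrite /= coefB coefX coefC sub0r expr1.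
split=> //; split.
- move=> [|i] // lt_si; rewrite coef_hpolySS B1 // A1 ?B1; [ring | lia | lia].
- by rewrite coef_hpolySS B2 B1 // A1 //; ring.
- by rewrite coef_hpolySS B3 !exprS; ring.
Qed.

Lemma gpoly_coef s :
  (forall i, (s < i)%N -> (gpoly s)`_i = 0) /\ (gpoly s)`_0 = (- K) ^+ s.+1.
Proof.
case: (hpoly_coef s) (hpoly_coef s.+1) => [A1 A2 _] [B1 B2 B3].
split; last by rewrite /gpoly coefB coefXM /= subr0 B3.
move=> [|i] // lt_si; rewrite /gpoly coefB coefXM /=.
have [->|ne_is] := eqVneq i s; first by rewrite A2 B2 subrr.
by rewrite B1 ?A1 ?subr0 //; lia.
Qed.

Lemma apoly_coef_lo r t j : (t < r)%N -> (j < t)%N || (r <= j)%N -> (apoly r t)`_j = 0.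
Proof.
move=> lt_tr out_j; rewrite /apoly lt_tr coefN coefXnM.
case: ifP => lt_jt; first by rewrite oppr0.
case: (hpoly_coef (r - t).-1) => vanish _ _.
by rewrite vanish ?oppr0 //; lia.
Qed.

Lemma apoly_coef_hi r t j : (r < t)%N -> (j < r)%N || (t <= j)%N -> (apoly r t)`_j = 0.
Proof.
move=> lt_rt out_j; rewrite /apoly ltnNge (ltnW lt_rt) /= gtn_eqF // coefXnM.
case: ifP => // /negbT ge_jr; case: (hpoly_coef (t - r).-1) => vanish _ _.
by rewrite vanish //; lia.
Qed.

Lemma apoly_rr r : apoly r r = 0.
Proof. by rewrite /apoly ltnn eqxx. Qed.

Lemma apoly_coef_ge r t j : (r <= j)%N -> (t <= j)%N -> (apoly r t)`_j = 0.
Proof.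
move=> le_rj le_tj; case: (ltngtP t r) => [lt_tr|lt_rt|->].
- by apply: apoly_coef_lo; rewrite // le_rj orbT.
- by apply: apoly_coef_hi; rewrite // le_tj orbT.
- by rewrite apoly_rr coef0.
Qed.

Lemma apoly_diag_lo r t : (t < r)%N -> (apoly r t)`_t = - (- K) ^+ (r - t).-1.
Proof.
move=> lt_tr; rewrite /apoly lt_tr coefN coefXnM ltnn subnn.
by case: (hpoly_coef (r - t).-1) => _ _ ->.
Qed.

Lemma apoly_diag_hi r t : (r < t)%N -> (apoly r t)`_t.-1 = 1.
Proof.
move=> lt_rt; rewrite /apoly ltnNge (ltnW lt_rt) /= gtn_eqF // coefXnM.
rewrite ifF; last by apply/negbTE; rewrite -leqNgt; lia.
by rewrite (_ : t.-1 - r = (t - r).-1)%N; [case: (hpoly_coef (t - r).-1) | lia].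
Qed.

End CurvePolynomials.

Lemma bumpE r l : bump r l = if (l < r)%N then l else l.+1.
Proof. by rewrite /bump ltnNge; case: (r <= l)%N. Qed.

Lemma sum_pred_rev_bin2 r : (\sum_(i < r) (r - i).-1 = 'C(r, 2))%N.
Proof.
rewrite -bin2_sum big_mkord [RHS](reindex_inj rev_ord_inj) /=.
by apply: eq_bigr => i _; rewrite subnS.
Qed.

Section CoefficientMatrices.
Variables (F : fieldType) (N : nat).

Lemma det_lower_upper_trig r (A : 'M[F]_N) :
  (forall l j : 'I_N, (j < r)%N -> (l < j)%N || (r <= l)%N -> A l j = 0) ->
  (forall l j : 'I_N, (r <= j)%N -> (j < l)%N || (l < r)%N -> A l j = 0) ->
  \det A = \prod_i A i i.
Proof.
move=> lowerA upperA.
pose A1 : 'M[F]_N := \matrix_(l, j) if (j < r)%N then A l j else (l == j)%:R.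
pose A2 : 'M[F]_N := \matrix_(l, j) if (j < r)%N then (l == j)%:R else A l j.
have defA : A = A1 *m A2.
  apply/matrixP => l j; rewrite !mxE; case: (ltnP j r) => [lt_jr|le_rj].
    rewrite (bigD1 j) //= big1 ?addr0 => [|k ne_kj]; rewrite !mxE lt_jr.
      by rewrite eqxx mulr1.
    by rewrite (negbTE ne_kj) mulr0.
  have jr_false : (j < r)%N = false by rewrite ltnNge le_rj.
  rewrite (bigD1 l) //= big1 ?addr0 => [|k ne_kl]; rewrite !mxE jr_false.
    case: (ltnP l r) => [lt_lr|_]; last by rewrite eqxx mul1r.
    by rewrite (upperA l j) ?lt_lr ?orbT ?mulr0.
  case: (ltnP k r) => [lt_kr|_]; first by rewrite (upperA k j) ?lt_kr ?orbT ?mulr0.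
  by rewrite eq_sym (negbTE ne_kl) mul0r.
rewrite {1}defA det_mulmx det_trig; last first.
  apply/is_trig_mxP => l j lt_lj; rewrite !mxE; case: ifP => lt_jr.
    by apply: lowerA; rewrite ?lt_lj.
  by rewrite -val_eqE /= ltn_eqF.
rewrite -det_tr det_trig; last first.
  apply/is_trig_mxP => l j lt_lj; rewrite !mxE; case: ifP => lt_lr.
    by rewrite -val_eqE /= gtn_eqF.
  by apply: upperA; rewrite ?lt_lj // leqNgt lt_lr.
rewrite -big_split; apply: eq_bigr => i _.
by rewrite !mxE; case: ifP; rewrite eqxx /= ?mulr1 ?mul1r.
Qed.

Lemma sum_bump_delta r t (g : nat -> F) : (r <= N)%N -> (t <= N)%N -> g r = 0 ->
  \sum_(j < N) g (bump r j) * (bump r j == t)%:R = g t.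
Proof.
move=> le_rN le_tN gr0; have [->|ne_tr] := eqVneq t r.
  by rewrite gr0 big1 // => j _; rewrite eq_sym (negbTE (neq_bump _ _)) mulr0.
have lt_uN : (unbump r t < N)%N.
  by move: ne_tr; rewrite /unbump; case: (ltnP r t) => /= *; lia.
rewrite (bigD1 (Ordinal lt_uN)) //= unbumpK ?inE // eqxx mulr1 big1 ?addr0 //.
move=> j ne_j; rewrite (_ : (bump r j == t) = false) ?mulr0 //.
apply/negbTE; apply: contra ne_j => /eqP bj.
by apply/eqP/val_inj; rewrite /= -bj bumpK.
Qed.

Lemma prod_ord_if_ltn r (u : nat -> F) : (r <= N)%N ->
  \prod_(i < N) (if (i < r)%N then u i else 1) = \prod_(i < r) u i.
Proof. by move=> le_rN; rewrite -big_mkcond (big_ord_narrow le_rN). Qed.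

Variable K : F.

Definition apoly_mx r : 'M[F]_N := \matrix_(l, j) (apoly K r (bump r j))`_l.

Definition shift_mx r xi : 'M[F]_N :=
  \matrix_(j, i) ((bump r j == i.+1)%:R - xi * (bump r j == i)%:R).

Definition apoly_diff_mx r xi : 'M[F]_N := \matrix_(l, i) (apoly K r i.+1 - xi *: apoly K r i)`_l.

Definition gpoly_mx : 'M[F]_N := \matrix_(l, i) ('X^i * gpoly K (N - i).-1)`_l.

(* [apoly r r = 0], so [apoly_mx r] skips the index r through [bump r], and
   [shift_mx] recombines the columns t.+1 and t. *)
Lemma apoly_diff_mx_factor r xi : (r <= N)%N -> apoly_diff_mx r xi = apoly_mx r *m shift_mx r xi.
Proof.
move=> le_rN; apply/matrixP => l i; rewrite !mxE.
under eq_bigr do rewrite !mxE mulrBr.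
rewrite big_split /= coefB coefZ sumrN; congr (_ - _).
  by rewrite (@sum_bump_delta r i.+1 (fun t => (apoly K r t)`_l)) ?apoly_rr ?coef0.
under eq_bigr do rewrite mulrCA.
rewrite -mulr_sumr (@sum_bump_delta r i (fun t => (apoly K r t)`_l)) ?apoly_rr ?coef0 //.
exact: ltnW.
Qed.

Lemma det_apoly_mx r : (r <= N)%N -> \det (apoly_mx r) = (-1) ^+ r * (- K) ^+ 'C(r, 2).
Proof.
move=> le_rN; rewrite (@det_lower_upper_trig r).
- rewrite (eq_bigr (fun i : 'I_N => if (i < r)%N then - (- K) ^+ (r - i).-1 else 1)).
    rewrite (prod_ord_if_ltn (fun i => - (- K) ^+ (r - i).-1)) //.
    rewrite (eq_bigr (fun i : 'I_r => -1 * (- K) ^+ (r - i).-1)) => [|i _]; last first.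
      by rewrite mulN1r.
    by rewrite big_split /= prodr_const card_ord prodrXr sum_pred_rev_bin2.
  move=> i _; rewrite mxE bumpE; case: ifP => [lt_ir|/negbT].
    exact: apoly_diag_lo.
  by rewrite -leqNgt => le_ri; apply: apoly_diag_hi.
- by move=> l j lt_jr out_l; rewrite mxE bumpE lt_jr apoly_coef_lo.
- move=> l j le_rj out_l; rewrite mxE bumpE ltnNge le_rj /= apoly_coef_hi //; lia.
Qed.

Lemma det_shift_mx r xi : (r <= N)%N -> \det (shift_mx r xi) = (- xi) ^+ r.
Proof.
move=> le_rN.
have zero_entry (l j : 'I_N) : bump r l != j.+1 -> bump r l != j -> shift_mx r xi l j = 0.
  by rewrite mxE => /negbTE-> /negbTE->; rewrite mulr0 subr0.
rewrite (@det_lower_upper_trig r) => [|l j ? ?|l j ? ?]; last 2 first.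
- by apply: zero_entry; rewrite bumpE; case: ifP => *; apply/eqP; lia.
- by apply: zero_entry; rewrite bumpE; case: ifP => *; apply/eqP; lia.
rewrite (eq_bigr (fun i : 'I_N => if (i < r)%N then - xi else 1)).
  by rewrite (prod_ord_if_ltn (fun _ => - xi)) // prodr_const card_ord.
move=> i _; rewrite mxE bumpE; case: ifP => _.
  by rewrite eqxx (ltn_eqF (ltnSn i)) mulr1 sub0r.
by rewrite eqxx (gtn_eqF (ltnSn i)) mulr0 subr0.
Qed.

Lemma det_apoly_diff_mx r xi : (r <= N)%N ->
  \det (apoly_diff_mx r xi) = (- K) ^+ ((r * (r - 1)) %/ 2) * xi ^+ r.
Proof.
move=> le_rN; rewrite apoly_diff_mx_factor // det_mulmx det_apoly_mx // det_shift_mx //.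
by rewrite bin2 divn2 subn1 -mulrA mulrCA -exprMn mulN1r opprK.
Qed.

Lemma det_gpoly_mx : \det gpoly_mx = (- K) ^+ (((N + 1) * N) %/ 2).
Proof.
rewrite det_trig; last by apply/is_trig_mxP => l i lt_li; rewrite mxE coefXnM lt_li.
have diag (i : 'I_N) : gpoly_mx i i = (- K) ^+ (N - i).
  rewrite mxE coefXnM ltnn subnn; case: (gpoly_coef K (N - i).-1) => _ ->.
  by rewrite prednK // subn_gt0.
rewrite (eq_bigr _ (fun i _ => diag i)) prodrXr; congr (_ ^+ _).
rewrite (_ : ((N + 1) * N) %/ 2 = 'C(N.+1, 2))%N; last by rewrite bin2 divn2 addn1.
rewrite -bin2_sum big_nat_recl //= add0n big_mkord (reindex_inj rev_ord_inj) /=.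
by apply: eq_bigr => i _; have := ltn_ord i; lia.
Qed.

End CoefficientMatrices.

Section Amplitude.
Variables (F : fieldType) (x y : nat -> F).

Definition sfactor (k : nat) (t : F) : F := y k / x k * sratio x y k t.

Definition amplitude (n : nat) (xi : F) (k : nat) : F :=
  sfactor k xi * \prod_(l < n | (l : nat) != k) sfactor k (y l).

Definition theta_amplitude (n : nat) (xi : F) (m : int) : F :=
  theta x y (fun k => (x k / y k) ^ m) n (amplitude n xi).

End Amplitude.

Section ClosedForms.
Variables (F : fieldType) (x y : nat -> F) (K : F) (N : nat).
Hypothesis on_curve : forall k, (k < N)%N -> x k * y k = x k + y k + K.
Hypothesis xy_neq0 : forall k l, (k < N)%N -> (l < N)%N -> k != l -> x k - y l != 0.
Hypothesis yy_neq0 : forall k l, (k < N)%N -> (l < N)%N -> k != l -> y k - y l != 0.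
Local Notation Lam k := (x k * y k).

Lemma theta_vdm_factor e f (P : nat -> {poly F}) (b : nat -> F) :
  (forall k i, (k < N)%N -> (i < N)%N ->
     b k * (y k ^+ i + theta_weight x y e N f k * x k ^+ i) = (y k - x k) * (P i).[Lam k]) ->
  (forall i, (i < N)%N -> (size (P i) <= N)%N) ->
  theta x y e N f * vdm N y * \prod_(k < N) b k =
  \prod_(k < N) (y k - x k) * vdm N (fun k => Lam k) * \det (\matrix_(l < N, i < N) (P i)`_l).
Proof.
move=> rowsP sizeP; rewrite (theta_det _ _ (fun _ => 0)) //.
have factor_mx :
    diag_mx (\row_k b k) *m mixed_mx x y N N (theta_weight x y e N f) (fun _ => 0) =
    diag_mx (\row_k (y k - x k)) *m
      (pow_mx N (fun k => Lam k) *m \matrix_(l < N, i < N) (P i)`_l).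
  apply/matrixP => k i; rewrite !mul_diag_mx !mxE ltn_ord rowsP //; congr (_ * _).
  rewrite (horner_coef_wide _ (sizeP i (ltn_ord i))).
  by apply: eq_bigr => l _; rewrite !mxE mulrC.
have prod_row (g : nat -> F) : \prod_(i < N) (\row_(k < N) g k) 0 i = \prod_(i < N) g i.
  by apply: eq_bigr => i _; rewrite mxE.
have := congr1 determinant factor_mx.
rewrite !det_mulmx !det_diag det_pow_mx => eq_det.
rewrite mulrC -prod_row eq_det mulrA; congr (_ * _ * _).
by apply: eq_bigr => i _; rewrite mxE.
Qed.

Lemma vdm_neq0 : vdm N y != 0.
Proof.
rewrite vdm_ord; apply/prodf_neq0 => k _; apply/prodf_neq0 => l lt_lk.
by apply: yy_neq0; rewrite // gtn_eqF.
Qed.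

Section Weight.
Variables (e f : nat -> F) (xi : F).
Hypothesis yxi_neq0 : forall k, (k < N)%N -> y k - xi != 0.
Hypothesis x_neq0 : forall k, (k < N)%N -> x k != 0.

Lemma theta_closed r :
  (r <= N)%N ->
  (forall k, (k < N)%N -> theta_weight x y e N f k = - ((y k / x k) ^+ r * sratio x y k xi)) ->
  theta x y e N f * vdm N y * ((\prod_(k < N) x k) ^+ r * \prod_(k < N) (y k - xi)) =
  \prod_(k < N) (y k - x k) * vdm N (fun k => Lam k) * ((- K) ^+ ((r * (r - 1)) %/ 2) * xi ^+ r).
Proof.
move=> le_rN weight; rewrite -(@det_apoly_diff_mx _ N K r xi le_rN) -prodrXl -big_split /=.
apply: (@theta_vdm_factor _ _ (fun i => apoly K r i.+1 - xi *: apoly K r i)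
  (fun k => x k ^+ r * (y k - xi))).
  move=> k i lt_kN lt_iN; rewrite weight // /sratio hornerD hornerN hornerZ.
  rewrite [in RHS]mulrBr [in RHS]mulrCA !(horner_apoly (on_curve lt_kN)) expr_div_n !exprS.
  by field; rewrite yxi_neq0 // expf_neq0 // x_neq0.
move=> i lt_iN; apply/leq_sizeP => j le_Nj.
by rewrite coefB coefZ !apoly_coef_ge ?mulr0 ?subr0 // (leq_trans _ le_Nj) // ltnW.
Qed.

Lemma theta_closed_N1 :
  xi = 1 ->
  (forall k, (k < N)%N -> theta_weight x y e N f k = - ((y k / x k) ^+ N.+1 * sratio x y k xi)) ->
  theta x y e N f * vdm N y * ((\prod_(k < N) x k) ^+ N.+1 * \prod_(k < N) (y k - xi)) =
  \prod_(k < N) (y k - x k) * vdm N (fun k => Lam k) * (- K) ^+ (((N + 1) * N) %/ 2).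
Proof.
move=> xi1 weight; rewrite -(@det_gpoly_mx _ N K) -prodrXl -big_split /=.
apply: (@theta_vdm_factor _ _ (fun i => 'X^i * gpoly K (N - i).-1)
  (fun k => x k ^+ N.+1 * (y k - xi))).
  move=> k i lt_kN lt_iN; rewrite weight // /sratio hornerM hornerXn.
  rewrite [in RHS]mulrCA (horner_gpoly (on_curve lt_kN)) xi1.
  have -> : N.+1 = (i + (N - i).-1.+2)%N by lia.
  rewrite expr_div_n !exprD ?exprMn !exprS; field.
  by rewrite -xi1 yxi_neq0 // !expf_neq0 // x_neq0.
move=> i lt_iN; apply/leq_sizeP => j le_Nj; rewrite coefXnM; case: ifP => // ge_ji.
by case: (gpoly_coef K (N - i).-1) => vanish _; rewrite vanish //; lia.
Qed.

End Weight.

Lemma theta_weight_amplitude e xi k : (k < N)%N -> x k != 0 ->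
  theta_weight x y e N (amplitude x y N xi) k = - ((y k / x k) ^+ N * e k * sratio x y k xi).
Proof.
move=> lt_kN xk_neq0; rewrite /theta_weight /amplitude /sfactor.
rewrite -(big_mkord (fun l => l != k) (fun l => y k / x k * sratio x y k (y l))) big_split /=.
have pow_u : y k / x k * \prod_(0 <= l < N | l != k) (y k / x k) = (y k / x k) ^+ N.
  by rewrite -(bigD1_seq (F := fun _ => y k / x k) k) ?mem_index_iota ?iota_uniq //
    prodr_const_nat subn0.
have : \prod_(0 <= j < N | j != k) sratio x y k (y j) != 0.
  rewrite prodf_seq_neq0; apply/allP => j; rewrite mem_index_iota => /andP[_ lt_jN].
  by apply/implyP => ne_jk; rewrite /sratio mulf_neq0 ?invr_eq0 ?xy_neq0 ?yy_neq0 // eq_sym.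
rewrite -pow_u; set P := \prod_(_ <= _ < _ | _) sratio _ _ _ _ => P_neq0.
by field; rewrite xk_neq0 P_neq0.
Qed.

Section AmplitudeClosedForms.
Variable xi : F.
Hypothesis yxi_neq0 : forall k, (k < N)%N -> y k - xi != 0.
Hypothesis x_neq0 : forall k, (k < N)%N -> x k != 0.
Hypothesis y_neq0 : forall k, (k < N)%N -> y k != 0.

Local Notation th := (theta_amplitude x y N xi).
Let PD := \prod_(k < N) x k.
Let Q := \prod_(k < N) (y k - xi).
Let C := \prod_(k < N) (y k - x k) * vdm N (fun k => Lam k) / (vdm N y * Q).

Let PD_neq0 : PD != 0. Proof. by apply/prodf_neq0 => k _; apply: x_neq0. Qed.
Let Q_neq0 : Q != 0. Proof. by apply/prodf_neq0 => k _; apply: yxi_neq0. Qed.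

Lemma theta_amplitude_nat m : (m <= N)%N ->
  th m = C * ((- K) ^+ (((N - m) * (N - m - 1)) %/ 2) * (xi / PD) ^+ (N - m)).
Proof.
move=> le_mN.
have weight k : (k < N)%N -> theta_weight x y (fun k => (x k / y k) ^ m) N
    (amplitude x y N xi) k = - ((y k / x k) ^+ (N - m) * sratio x y k xi).
  move=> lt_kN; rewrite theta_weight_amplitude ?x_neq0 //.
  rewrite (exprB le_mN) ?unitfE ?mulf_neq0 ?invr_eq0 ?x_neq0 ?y_neq0 //.
  by rewrite -exprVn invf_div.
have := theta_closed yxi_neq0 x_neq0 (leq_subr m N) weight; rewrite -/PD -/Q => closed.
apply: (mulIf (mulf_neq0 vdm_neq0 (mulf_neq0 (expf_neq0 (N - m) PD_neq0) Q_neq0))).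
rewrite /theta_amplitude mulrA closed /C expr_div_n.
by field; rewrite vdm_neq0 Q_neq0 expf_neq0.
Qed.

Lemma theta_amplitude_N1 : xi = 1 ->
  th (-1) = C * ((- K) ^+ (((N + 1) * N) %/ 2) * (xi / PD) ^+ (N + 1)).
Proof.
move=> xi1.
have weight k : (k < N)%N -> theta_weight x y (fun k => (x k / y k) ^ (-1)) N
    (amplitude x y N xi) k = - ((y k / x k) ^+ N.+1 * sratio x y k xi).
  by move=> lt_kN; rewrite theta_weight_amplitude ?x_neq0 // exprN1 invf_div exprSr.
have := theta_closed_N1 yxi_neq0 x_neq0 xi1 weight; rewrite -/PD -/Q => closed.
apply: (mulIf (mulf_neq0 vdm_neq0 (mulf_neq0 (expf_neq0 N.+1 PD_neq0) Q_neq0))).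
rewrite /theta_amplitude mulrA closed /C expr_div_n xi1 expr1n addn1.
by field; rewrite vdm_neq0 Q_neq0 expf_neq0.
Qed.

Lemma theta_amplitude_top :
  th N = \prod_(k < N) ((y k - x k) / (y k - xi)) *
         \prod_(k < N) \prod_(l < N | (l < k)%N) ((Lam l - Lam k) / (y l - y k)).
Proof.
rewrite theta_amplitude_nat // subnn expr0 mul1r mulr1 /C prodf_div -/Q.
rewrite (prod_ratio_vdm N (fun k => Lam k) y).
by field; rewrite vdm_neq0 Q_neq0.
Qed.

Lemma theta_amplitude_shift m : (m <= N)%N ->
  th m = (- K) ^+ (((N - m) * (N - m - 1)) %/ 2) * (xi / PD) ^+ (N - m) * th N.
Proof.
move=> le_mN; rewrite !theta_amplitude_nat // subnn expr0 mul1r mulr1.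
by rewrite mulrC.
Qed.

Lemma theta_amplitude_N1_shift : xi = 1 ->
  th (-1) = (- K) ^+ (((N + 1) * N) %/ 2) * (xi / PD) ^+ (N + 1) * th N.
Proof.
move=> xi1; rewrite theta_amplitude_N1 // theta_amplitude_nat // subnn expr0 mul1r mulr1.
by rewrite mulrC.
Qed.

End AmplitudeClosedForms.
End ClosedForms.

Local Open Scope complex_scope.

Section Delta.
Variable R : realType.

Lemma expi_mulN (a : R) : expi a * expi (- a) = 1.
Proof.
rewrite /expi cosN sinN; apply/eqP; rewrite eq_complex /=.
by apply/andP; split; apply/eqP; rewrite -?(cos2Dsin2 a); ring.
Qed.

Lemma expi_addN (a : R) : expi a + expi (- a) = (2 * cos a)%:C.
Proof.
rewrite /expi cosN sinN; apply/eqP; rewrite eq_complex /=.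
by apply/andP; split; apply/eqP; ring.
Qed.

Lemma DeltaF_expi (phi : R) (rt : R[i]) : DeltaF phi rt = expi phi ^+ 2 * DeltaSF phi rt.
Proof.
by rewrite /DeltaF /DeltaSF expr2 -mulrA (mulrA (expi phi) (expi (- phi))) expi_mulN mul1r.
Qed.

Lemma DeltaF_DeltaSF_curve (phi : R) (rt K : R[i]) :
  rt ^+ 2 = (cos phi ^+ 2)%:C + K ->
  DeltaF phi rt * DeltaSF phi rt = DeltaF phi rt + DeltaSF phi rt + K.
Proof.
move=> rt_sqr; rewrite /DeltaF /DeltaSF.
have := expi_mulN phi; have := expi_addN phi; rewrite rmorphM rmorph_nat.
move: rt_sqr; rewrite rmorphXn.
set c := (cos phi)%:C; set a := expi phi; set b := expi (- phi) => rt_sqr ab_add ab_mul.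
transitivity ((a * b) * (rt + c) ^+ 2); first by ring.
rewrite ab_mul -mulrDl ab_add.
have -> : K = rt ^+ 2 - c ^+ 2 by rewrite rt_sqr; ring.
by ring.
Qed.

Lemma DeltaSF_neq0 (phi : R) (rt : R[i]) : DeltaF phi rt != 0 -> DeltaSF phi rt != 0.
Proof. by apply: contraNneq; rewrite DeltaF_expi => ->; rewrite mulr0. Qed.

Lemma expi_sqr (phi : R) (rt : R[i]) :
  DeltaSF phi rt != 0 -> expi phi ^+ 2 = DeltaF phi rt / DeltaSF phi rt.
Proof. by move=> Ds_neq0; rewrite DeltaF_expi mulfK. Qed.

End Delta.

Lemma Theta_theta (R : realType) (D Ds E : nat -> R[i]) m n f :
  Theta D Ds E m n f = theta D Ds (fun k => E k ^ (2 * m)) n f.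
Proof. by elim: n f => [|n IH] f //=; rewrite !IH. Qed.

Unset Implicit Arguments.

Theorem mainTheorem2 (R : realType) (M n : nat) (j : nat -> nat)
    (K xi : R[i]) (rt : nat -> R[i]) :
  (2 <= M)%N -> (1 <= n <= M - 1)%N ->
  (* phi_k = j_k pi / M are distinct elements of F_M *)
  (forall k, (k < n)%N -> (0 < j k < M)%N) ->
  (forall k l, (k < n)%N -> (l < n)%N -> j k = j l -> k = l) ->
  (* rt k is a chosen square root of cos^2 phi_k + K *)
  (forall k, (k < n)%N -> rt k ^+ 2 = (cos (phiM R M (j k)) ^+ 2)%:C + K) ->
  let D := fun k => DeltaF (phiM R M (j k)) (rt k) in
  let Ds := fun k => DeltaSF (phiM R M (j k)) (rt k) in
  let E := fun k => expi (phiM R M (j k)) in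
  let Lam := fun k => D k * Ds k in
  (* genericity: all denominators are nonzero *)
  (forall k, (k < n)%N -> D k != 0) ->
  (forall k, (k < n)%N -> Ds k - xi != 0) ->
  (forall k l, (k < n)%N -> (l < n)%N -> k != l -> D k - Ds l != 0) ->
  (forall k l, (k < n)%N -> (l < n)%N -> k != l -> Ds k - Ds l != 0) ->
  let Th := fun (m : int) (x : R[i]) => Theta D Ds E m n (ampl D Ds n x) in
  let PD := \prod_(k < n) D k in
  Th n%:Z xi =
    (\prod_(k < n) ((Ds k - D k) / (Ds k - xi))) *
    \prod_(k < n) \prod_(l < n | (l < k)%N) ((Lam l - Lam k) / (Ds l - Ds k))
  /\ (forall m : nat, (m <= n)%N ->
        Th m%:Z xi = (- K) ^+ (((n - m) * (n - m - 1)) %/ 2) * (xi / PD) ^+ (n - m)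
                     * Th n%:Z xi)
  /\ (xi = 1 ->
        Th (-1) xi = (- K) ^+ (((n + 1) * n) %/ 2) * (xi / PD) ^+ (n + 1)
                     * Th n%:Z xi).
Proof.
(* The closed forms hold for arbitrary phases: only the genericity assumptions are used. *)
move=> _ _ _ _ rt_sqr D Ds E Lam D_neq0 Dsxi_neq0 DDs_neq0 DsDs_neq0 Th PD.
have Ds_neq0 k : (k < n)%N -> Ds k != 0 by move/D_neq0/DeltaSF_neq0.
have on_curve k : (k < n)%N -> D k * Ds k = D k + Ds k + K.
  by move/rt_sqr/DeltaF_DeltaSF_curve.
have Th_amplitude m : Th m xi = theta_amplitude D Ds n xi m.
  rewrite /Th Theta_theta; apply: eq_theta => k lt_kn.
  by rewrite -exprz_exp; congr (_ ^ _); exact: expi_sqr (Ds_neq0 k lt_kn).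
split; first by rewrite Th_amplitude;
  apply: (theta_amplitude_top on_curve DDs_neq0 DsDs_neq0 Dsxi_neq0 D_neq0 Ds_neq0).
split=> [m le_mn|xi1]; rewrite !Th_amplitude.
  exact: (theta_amplitude_shift on_curve DDs_neq0 DsDs_neq0 Dsxi_neq0 D_neq0 Ds_neq0).
exact: (theta_amplitude_N1_shift on_curve DDs_neq0 DsDs_neq0 Dsxi_neq0 D_neq0 Ds_neq0).
Qed.
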